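(* Let $I$ be a proper tropical ideal in $\overline{\mathbb R}[x_1^{\pm1},\dots,x_n^{\pm1}]$ or in $\overline{\mathbb R}[x_1,\dots,x_n]$. For any $a\in\mathbb R$, $\dim(I|_{x_n=a})\le\dim(I)-1$, where $I|_{x_n=a}=\{f|_{x_n=a}:f\in I\}$.
   Context: $\overline{\mathbb R}=(\mathbb R\cup\{\infty\},\min,+)$; $f|_{x_n=a}$ is the substitution $x_n=a$. Tropical ideal: for $f,g\in I$ and monomial $\mathbf x^{\mathbf u}$ with equal coefficients $[f]_{\mathbf x^{\mathbf u}}=[g]_{\mathbf x^{\mathbf u}}\ne\infty$ there is $h\in I$ with $[h]_{\mathbf x^{\mathbf u}}=\infty$ and $[h]_{\mathbf x^{\mathbf v}}\ge\min([f]_{\mathbf x^{\mathbf v}},[g]_{\mathbf x^{\mathbf v}})$ for all $\mathbf v$, with equality when $[f]_{\mathbf x^{\mathbf v}}\ne[g]_{\mathbf x^{\mathbf v}}$. Dimension: for homogeneous tropical $J\subseteq\overline{\mathbb R}[x_0,\dots,x_n]$, $H_J(e)$ is the maximum size of a set of degree-$e$ monomials containing the support of no element $\ne\infty$ of $J$; it agrees with a polynomial for $e\gg0$ and $\dim J$ is the degree of that polynomial. For $I\subseteq\overline{\mathbb R}[x_1,\dots,x_n]$, $\dim I=\dim I^h$, with $I^h$ generated by the homogenizations $\bigoplus c_{\mathbf u}x_0^{D-|\mathbf u|}\mathbf x^{\mathbf u}$ ($D=\max\{|\mathbf u|:c_{\mathbf u}\ne\infty\}$) of elements of $I$; for Laurent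 $I$, $\dim I=\dim(I\cap\overline{\mathbb R}[x_1,\dots,x_n])$. Proper means $I$ is not the whole semiring. *)

From HB Require Import structures.
From mathcomp Require Import all_boot all_order all_algebra.
From mathcomp Require Import reals.
Set Implicit Arguments. Unset Strict Implicit. Unset Printing Implicit Defensive.
Import Order.TTheory GRing.Theory Num.Theory.
Local Open Scope ring_scope.

(* An element of Rbar is an [option R]; [None] stands for oo.              *)
Definition trop (R : realType) := option R.

Definition tle (R : realType) (x y : trop R) : Prop :=
  match x, y with
  | _, None => True
  | None, Some _ => False
  | Some a, Some b => a <= b
  end.

Definition tmin (R : realType) (x y : trop R) : trop R :=
  match x, y with
  | None, _ => y
  | _, None => x
  | Some a, Some b => Some (Num.min a b)
  end.

Definition tmul (R : realType) (x y : trop R) : trop R :=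
  match x, y with
  | Some a, Some b => Some (a + b)
  | _, _ => None
  end.

(* [x] is the (tropical) minimum of the family of values [P]; for a family
   with finitely many finite values this determines x uniquely. *)
Definition is_tinf (R : realType) (P : trop R -> Prop) (x : trop R) : Prop :=
  (forall y, P y -> tle x y) /\ (x = None \/ P x).

(* Exponent vectors in n variables x_1..x_n (indexed by 'I_n), with
   exponents in E = nat (polynomials) or E = int (Laurent polynomials). *)
Definition mon (E : nmodType) (n : nat) := {ffun 'I_n -> E}.

Definition madd (E : nmodType) n (u v : mon E n) : mon E n :=
  [ffun i => u i + v i].

(* A tropical (Laurent) polynomial is a finitely supported coefficient
   function; [f u = None] means the coefficient of x^u is oo. *)
Definition tpolyfun (R : realType) (E : nmodType) n := mon E n -> trop R.

Definition finsupp (R : realType) (E : nmodType) n (f : tpolyfun R E n) : Prop :=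
  exists s : seq (mon E n), forall u, f u <> None -> u \in s.

Definition pset (R : realType) (E : nmodType) n := tpolyfun R E n -> Prop.

Definition tinfty (R : realType) (E : nmodType) n : tpolyfun R E n :=
  fun _ => None.

Definition tadd (R : realType) (E : nmodType) n (f g : tpolyfun R E n)
  : tpolyfun R E n := fun u => tmin (f u) (g u).

Definition is_prod (R : realType) (E : nmodType) n (f g h : tpolyfun R E n) : Prop :=
  forall w, is_tinf (fun y => exists u v, madd u v = w /\ y = tmul (f u) (g v)) (h w).

Definition is_ideal (R : realType) (E : nmodType) n (J : pset R E n) : Prop :=
  [/\ (forall f, J f -> finsupp f),
      J (@tinfty R E n),
      (forall f g, J f -> J g -> J (tadd f g)) &
      (forall g f h, finsupp g -> J f -> is_prod g f h -> J h)].

(* tropical ideal: ideal satisfying the monomial elimination axiom *)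
Definition tropical_ideal (R : realType) (E : nmodType) n (I : pset R E n) : Prop :=
  is_ideal I /\
  forall f g u, I f -> I g -> f u = g u -> f u <> None ->
    exists h, [/\ I h, h u = None &
      forall v, tle (tmin (f v) (g v)) (h v) /\
                (f v <> g v -> h v = tmin (f v) (g v))].

Definition tproper (R : realType) (E : nmodType) n (I : pset R E n) : Prop :=
  exists f, finsupp f /\ ~ I f.

Definition gen_ideal (R : realType) (E : nmodType) n (S : pset R E n) : pset R E n :=
  fun g => forall J : pset R E n, is_ideal J -> (forall s, S s -> J s) -> J g.

Definition mdeg n (u : mon nat n) : nat := (\sum_i (u i : nat))%N.

Definition indep (R : realType) n (J : pset R nat n) (S : seq (mon nat n)) : Prop :=
  forall f, J f -> (exists u, f u <> None) -> ~ (forall u, f u <> None -> u \in S).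

Definition hilb_fun (R : realType) n (J : pset R nat n) (e m : nat) : Prop :=
  (exists S : seq (mon nat n),
     [/\ uniq S, size S = m, (forall u, u \in S -> mdeg u = e) & indep J S]) /\
  (forall S : seq (mon nat n), uniq S -> (forall u, u \in S -> mdeg u = e) ->
     indep J S -> (size S <= m)%N).

(* dim J = d for a homogeneous J in Rbar[x_0,...,x_k]: H_J agrees with a
   polynomial P for e >> 0 and d = deg P (deg 0 = -1 by convention). *)
Definition dim_hom (R : realType) n (J : pset R nat n) (d : int) : Prop :=
  exists P : {poly rat},
    (exists e0 : nat, forall e : nat, (e0 <= e)%N ->
       exists m : nat, hilb_fun J e m /\ P.[e%:R] = m%:R) /\
    d = (size P)%:Z - 1.

(* homogenization: variables x_0, x_1..x_k of Rbar[x_0..x_k] are indexed by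
   'I_k.+1, x_0 being ord0 and x_i being lift ord0 (i-1). *)
Definition mtail k (w : mon nat k.+1) : mon nat k := [ffun i => w (lift ord0 i)].

Definition is_homogenization (R : realType) k (f : tpolyfun R nat k)
    (fh : tpolyfun R nat k.+1) : Prop :=
  exists D : nat,
    [/\ (forall u, f u <> None -> (mdeg u <= D)%N),
        (forall u, f u = None) \/ (exists u, f u <> None /\ mdeg u = D) &
        forall w, fh w = if mdeg w == D then f (mtail w) else None].

Definition hom_ideal (R : realType) k (I : pset R nat k) : pset R nat k.+1 :=
  gen_ideal (fun fh => exists f, I f /\ is_homogenization f fh).

Definition dim_poly (R : realType) k (I : pset R nat k) (d : int) : Prop :=
  dim_hom (hom_ideal I) d.

Definition laurent_of (R : realType) k (f : tpolyfun R nat k) : tpolyfun R int k :=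
  fun u => if [forall i, 0 <= u i] then f [ffun i => `|u i|%N] else None.

(* dimension of an ideal in Rbar[x_1^{+-1}..x_k^{+-1}]: dim (I cap Rbar[x]) *)
Definition dim_laurent (R : realType) k (I : pset R int k) (d : int) : Prop :=
  dim_poly (fun f => finsupp f /\ I (laurent_of f)) d.

(* For n+1 variables, the last one (ord_max) is substituted. *)
Definition mextend (E : nmodType) n (u : mon E n) (k : E) : mon E n.+1 :=
  [ffun i => if unlift ord_max i is Some j then u j else k].

(* g = f|_{x_last = a}: g_u = min_k (f_{(u,k)} + k*a); toR casts exponents *)
Definition is_subst (R : realType) (E : nmodType) (toR : E -> R) (a : R) n
    (f : tpolyfun R E n.+1) (g : tpolyfun R E n) : Prop :=
  forall u, is_tinf (fun y => exists k, y = tmul (f (mextend u k)) (Some (toR k * a))) (g u).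

Definition subst_set (R : realType) (E : nmodType) (toR : E -> R) (a : R) n
    (I : pset R E n.+1) : pset R E n :=
  fun g => exists f, I f /\ is_subst toR a f g.

From HB Require Import structures.
From mathcomp Require Import all_boot all_order all_algebra.
From mathcomp Require Import reals polyrcf.
From mathcomp Require Import lra zify.
From Stdlib Require Import Classical FunctionalExtensionality IndefiniteDescription.
Import Order.TTheory GRing.Theory Num.Theory.
Local Open Scope ring_scope.

Set Implicit Arguments.
Unset Strict Implicit.
Unset Printing Implicit Defensive.

(* Write I' for the substitution of x_n = a into I, and I^h for homogenizations
   (extra variable x_0).  If S is a set of monomials of degree e in
   x_0, .., x_(n-1) containing the support of no nonzero element of I'^h, then
   the monomials x_0^(K-j) x_n^j s (s in S, 0 <= j <= K) contain the support of
   no nonzero element of I^h: such an element, once dehomogenized (x_0 set to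
   the tropical unit 0) and substituted (x_n = a), gives a nonzero element of
   I' supported on the dehomogenizations of S, and homogenizing it to degree e
   contradicts the choice of S.  Since min has no cancellation,
   dehomogenization and substitution never kill a nonzero element, so only the
   ideal axioms are used, not the elimination axiom.  Taking K = e gives
   H_I(2e) >= (e + 1) H_I'(e), which forces deg H_I' < deg H_I; when H_I' = 0
   one uses instead H_I(e) >= 1, as x_0^e is independent for a proper I.
   The Laurent case reduces to the polynomial one through I cap R[x]. *)

Section TropicalArithmetic.
Variable R : realType.
Implicit Types x y z : trop R.

Lemma tle_refl x : tle x x.
Proof. by case: x => //= a. Qed.

Lemma tle_trans x y z : tle x y -> tle y z -> tle x z.
Proof. by case: x; case: y; case: z => //= a b c; apply: le_trans. Qed.

Lemma tle_anti x y : tle x y -> tle y x -> x = y.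
Proof. by case: x; case: y => //= a b h1 h2; congr Some; apply/eqP; rewrite eq_le h1. Qed.

Lemma tmin_lel x y : tle (tmin x y) x.
Proof. by case: x; case: y => //= *; rewrite ge_min lexx. Qed.

Lemma tmin_ler x y : tle (tmin x y) y.
Proof. by case: x; case: y => //= *; rewrite ge_min lexx ?orbT. Qed.

Lemma tmin_glb x y z : tle z x -> tle z y -> tle z (tmin x y).
Proof. by case: x; case: y; case: z => //= *; rewrite le_min; apply/andP. Qed.

Lemma tmin_eq x y : tmin x y = x \/ tmin x y = y.
Proof.
case: x; case: y => /=; try by [left|right].
move=> b a; case/orP: (le_total a b) => h; [left|right]; congr Some.
  by rewrite min_l.
by rewrite min_r.
Qed.

Lemma tmin_neq_None x y : tmin x y <> None -> x <> None \/ y <> None.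
Proof. by case: x => [a|] /= yN; [left|right]. Qed.

Lemma tmulC x y : tmul x y = tmul y x.
Proof. by case: x; case: y => //= *; rewrite addrC. Qed.

Lemma tle_tmul x y x' y' : tle x y -> tle x' y' -> tle (tmul x x') (tmul y y').
Proof. by case: x; case: y; case: x'; case: y' => //= *; apply: lerD. Qed.

Lemma tmul_neq_None x y : tmul x y <> None -> x <> None /\ y <> None.
Proof. by case: x; case: y. Qed.

Lemma tmul0l x : tmul (Some 0) x = x.
Proof. by case: x => //= r; rewrite add0r. Qed.

Lemma is_tinf_single (P : trop R -> Prop) x :
  (forall y, P y -> y = None \/ y = x) -> (x = None \/ P x) -> is_tinf P x.
Proof. by move=> hP hx; split=> // y /hP [->|->]; [case: x {hP hx}|apply: tle_refl]. Qed.

Lemma is_tinf_attained (P : trop R -> Prop) x : is_tinf P x -> x <> None -> P x.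
Proof. by move=> [_ []]. Qed.

Lemma is_tinf_neq_None (P : trop R -> Prop) x y :
  is_tinf P x -> P y -> y <> None -> x <> None.
Proof. by move=> [lb _] /lb + yN xN; rewrite xN; case: y yN. Qed.

Lemma is_tinf_ext (P Q : trop R -> Prop) x :
  is_tinf P x -> (forall y, Q y -> y = None \/ P y) -> (forall y, P y -> Q y) ->
  is_tinf Q x.
Proof.
move=> [lb hx] QP PQ; split; last by case: hx => [|/PQ]; [left|right].
by move=> y /QP [->|/lb]; first by case: x {lb hx}.
Qed.

Lemma is_tinf_ex (P : trop R -> Prop) (s : seq (trop R)) :
  (forall y, P y -> y <> None -> y \in s) -> exists x, is_tinf P x.
Proof.
elim: s P => [|b s IH] P Ps.
  exists None; split=> [[y /Ps|]|] //; last by left.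
  by rewrite in_nil => /(_ ltac:(discriminate)).
have [x [lb hx]] : exists x, is_tinf (fun y => P y /\ y <> b) x.
  apply: IH => y [Py yb] /(Ps _ Py); rewrite inE => /orP [/eqP|] //.
have [[Pb bN]|nPb] := classic (P b /\ b <> None).
- exists (tmin b x); split.
    move=> y Py; have [->|yb] := classic (y = b); first exact: tmin_lel.
    exact: tle_trans (tmin_ler _ _) (lb y (conj Py yb)).
  right; case: hx => [->|[Px _]]; first by case: (b) Pb.
  by case: (tmin_eq b x) => ->.
- exists x; split; last by case: hx => [|[]]; [left|right].
  move=> y Py; have [yb|yb] := classic (y = b); last exact: lb.
  have [->|yN] := classic (y = None); first by case: x {lb hx}.
  by case: nPb; rewrite -yb.
Qed.

Lemma is_tinf_choice (A J : Type) (F : A -> J -> trop R) (s : seq (trop R)) :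
  (forall i j, F i j <> None -> F i j \in s) ->
  exists m : A -> trop R, forall i, is_tinf (fun y => exists j, y = F i j) (m i).
Proof.
move=> Fs; apply: (functional_choice (fun i => is_tinf _)) => i.
by apply: (@is_tinf_ex _ s) => y [j ->]; apply: Fs.
Qed.

Lemma is_tinf_tmin (J : Type) (f g : J -> trop R) x x' :
  is_tinf (fun y => exists j, y = f j) x -> is_tinf (fun y => exists j, y = g j) x' ->
  is_tinf (fun y => exists j, y = tmin (f j) (g j)) (tmin x x').
Proof.
move=> [lbf hx] [lbg hx'].
have lb j : tle (tmin x x') (tmin (f j) (g j)).
  apply: tmin_glb.
    exact: tle_trans (tmin_lel _ _) (lbf _ (ex_intro _ j erefl)).
  exact: tle_trans (tmin_ler _ _) (lbg _ (ex_intro _ j erefl)).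
split=> [y [j ->] //|].
case: (tmin_eq x x') => e; rewrite e.
- case: hx => [|[j xj]]; [by left|right; exists j].
  by apply: tle_anti; [rewrite -e; apply: lb|rewrite xj; apply: tmin_lel].
- case: hx' => [|[j xj]]; [by left|right; exists j].
  by apply: tle_anti; [rewrite -e; apply: lb|rewrite xj; apply: tmin_ler].
Qed.

End TropicalArithmetic.

Definition mzero (E : nmodType) n : mon E n := [ffun => 0].

Definition minit (E : nmodType) n (v : mon E n.+1) : mon E n :=
  [ffun i => v (lift ord_max i)].

Definition mcons k (j : nat) (u : mon nat k) : mon nat k.+1 :=
  [ffun i => if unlift ord0 i is Some i' then u i' else j].

Section MonomialExtension.
Variables (E : nmodType) (n : nat).
Implicit Types (u v : mon E n) (k l : E).

Lemma madd0m u : madd (mzero E n) u = u.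
Proof. by apply/ffunP => i; rewrite !ffunE add0r. Qed.

Lemma maddm0 u : madd u (mzero E n) = u.
Proof. by apply/ffunP => i; rewrite !ffunE addr0. Qed.

Lemma mextend_max u k : mextend u k ord_max = k.
Proof. by rewrite ffunE unlift_none. Qed.

Lemma mextend_lift u k i : mextend u k (lift ord_max i) = u i.
Proof. by rewrite ffunE liftK. Qed.

Lemma mextendK u k : minit (mextend u k) = u.
Proof. by apply/ffunP => i; rewrite ffunE mextend_lift. Qed.

Lemma minitK (w : mon E n.+1) : mextend (minit w) (w ord_max) = w.
Proof.
by apply/ffunP => i; rewrite ffunE; case: unliftP => [j ->|->] //; rewrite ffunE.
Qed.

Lemma mextend_inj u v k l : mextend u k = mextend v l -> u = v /\ k = l.
Proof.
move=> e; split; first by rewrite -(mextendK u k) e mextendK.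
by rewrite -(mextend_max u k) e mextend_max.
Qed.

End MonomialExtension.

Section MonomialCons.
Variable k : nat.
Implicit Types (u v : mon nat k) (w : mon nat k.+1).

Lemma mcons0 j u : mcons j u ord0 = j.
Proof. by rewrite ffunE unlift_none. Qed.

Lemma mconsK j u : mtail (mcons j u) = u.
Proof. by apply/ffunP => i; rewrite !ffunE liftK. Qed.

Lemma mtailK w : mcons (w ord0) (mtail w) = w.
Proof.
by apply/ffunP => i; rewrite ffunE; case: unliftP => [j ->|->] //; rewrite ffunE.
Qed.

Lemma mcons_inj i j u v : mcons i u = mcons j v -> i = j /\ u = v.
Proof.
move=> e; split; first by rewrite -(mcons0 i u) e mcons0.
by rewrite -(mconsK i u) e mconsK.
Qed.

Lemma madd_mcons i j u v : madd (mcons i u) (mcons j v) = mcons (i + j) (madd u v).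
Proof. by apply/ffunP => x; rewrite !ffunE; case: unlift => // y; rewrite ffunE. Qed.

Lemma mtail_madd w w' : mtail (madd w w') = madd (mtail w) (mtail w').
Proof. by apply/ffunP => x; rewrite !ffunE. Qed.

Lemma mdegE w : mdeg w = (w ord0 + mdeg (mtail w))%N.
Proof. by rewrite /mdeg big_ord_recl; congr addn; apply: eq_bigr => i _; rewrite ffunE. Qed.

Lemma mdeg_mcons j u : mdeg (mcons j u) = (j + mdeg u)%N.
Proof. by rewrite mdegE mcons0 mconsK. Qed.

Lemma mtail_le_mdeg w : (mdeg (mtail w) <= mdeg w)%N.
Proof. by rewrite mdegE leq_addl. Qed.

Lemma mtail_mdeg_inj w w' : mtail w = mtail w' -> mdeg w = mdeg w' -> w = w'.
Proof.
move=> et; rewrite !mdegE et => /addIn e.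
by rewrite -(mtailK w) -(mtailK w') e et.
Qed.

End MonomialCons.

Lemma mdeg0 k : mdeg (mzero nat k) = 0%N.
Proof. by rewrite /mdeg big1 // => i _; rewrite ffunE. Qed.

Lemma mdeg_madd k (u v : mon nat k) : mdeg (madd u v) = (mdeg u + mdeg v)%N.
Proof. by rewrite /mdeg -big_split; apply: eq_bigr => i _; rewrite ffunE. Qed.

Lemma mdeg_mextend k (u : mon nat k) j : mdeg (mextend u j) = (mdeg u + j)%N.
Proof.
rewrite /mdeg big_ord_recr mextend_max; congr addn; apply: eq_bigr => i _.
have -> : widen_ord (leqnSn k) i = lift ord_max i.
  by apply: val_inj; rewrite /= /bump leqNgt ltn_ord.
by rewrite mextend_lift.
Qed.

Lemma poly_eventually_pos (p : {poly rat}) : 0 < lead_coef p ->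
  exists N : nat, forall e : nat, (N <= e)%N -> 0 < p.[e%:R].
Proof.
move=> lc_gt0; have [x px] := poly_pinfty_gt_lc lc_gt0.
exists (Num.truncn `|x|).+1 => e; rewrite truncn_lt_nat // => xe.
by apply: lt_le_trans lc_gt0 (px _ _); apply: le_trans (ler_norm x) (ltW xe).
Qed.

Lemma size_lt_of_eventually_le (P P' : {poly rat}) (e0 : nat) : P != 0 ->
  (forall e : nat, (e0 <= e)%N ->
     0 <= P'.[e%:R] /\ (e%:R + 1) * P'.[e%:R] <= P.[(e + e)%:R]) ->
  (size P' < size P)%N.
Proof.
move=> P_neq0 P_ge; have [->|P'_neq0] := eqVneq P' 0.
  by rewrite size_poly0 size_poly_gt0.
have lc_gt0 : 0 < lead_coef P'.
  rewrite lt_def lead_coef_eq0 P'_neq0 /=; apply: contraT; rewrite -ltNge => lc_lt0.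
  have := @poly_eventually_pos (- P'); rewrite lead_coefN oppr_gt0.
  case=> // N pos; have [P'_ge0 _] := P_ge _ (leq_maxr N e0).
  by have := pos _ (leq_maxl N e0); rewrite hornerN; lra.
rewrite ltnNge; apply/negP => size_le.
pose Q := ('X + 1) * P' - (P \Po (2%:R *: 'X)).
have size_lhs : size (('X + 1) * P') = (size P').+1.
  by rewrite size_mul ?size_XaddC // -size_poly_eq0 size_XaddC.
have size_comp : size (P \Po (2%:R *: 'X)) = size P.
  by rewrite size_comp_poly2 // size_scale ?size_polyX // pnatr_eq0.
have lcQ : lead_coef Q = lead_coef P'.
  rewrite /Q lead_coefDl; last by rewrite size_polyN size_comp size_lhs ltnS.
  by rewrite lead_coefM lead_coefXaddC mul1r.
have := @poly_eventually_pos Q; rewrite lcQ => /(_ lc_gt0) [N pos].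
have [_] := P_ge _ (leq_maxr N e0); have := pos _ (leq_maxl N e0).
set e := maxn N e0; rewrite /Q hornerD hornerN hornerM horner_comp !hornerE.
rewrite (_ : (e + e)%:R = 2 * e%:R); first lra.
by rewrite mulr_natl mulr2n natrD.
Qed.

Section Ideals.
Variable R : realType.

Lemma tadd_finsupp (E : nmodType) n (f g : tpolyfun R E n) :
  finsupp f -> finsupp g -> finsupp (tadd f g).
Proof.
move=> [sf hf] [sg hg]; exists (sf ++ sg) => u.
by rewrite mem_cat => /tmin_neq_None [/hf|/hg] ->; rewrite ?orbT.
Qed.

Lemma prod_finsupp (E : nmodType) n (g f h : tpolyfun R E n) :
  finsupp g -> finsupp f -> is_prod g f h -> finsupp h.
Proof.
move=> [sg hg] [sf hf] gfh; exists [seq madd u v | u <- sg, v <- sf] => w hw.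
have [u [v [uvw huv]]] := is_tinf_attained (gfh w) hw.
rewrite huv in hw; have [/hg gu /hf fv] := tmul_neq_None hw.
by rewrite -uvw; apply: allpairs_f.
Qed.

Definition tmonomial (E : nmodType) n (m : mon E n) : tpolyfun R E n :=
  fun w => if w == m then Some 0 else None.

Lemma tmonomial_finsupp (E : nmodType) n (m : mon E n) : finsupp (tmonomial m).
Proof. by exists [:: m] => w; rewrite /tmonomial inE; case: eqP. Qed.

Definition no_constant (E : nmodType) n (I : pset R E n) :=
  forall f, I f -> (forall u, f u <> None -> u = mzero E n) -> forall u, f u = None.

(* A constant c in I would put every h = (h - c) * c in I (tropical product). *)
Lemma proper_no_constant (E : nmodType) n (I : pset R E n) :
  is_ideal I -> tproper I -> no_constant I.
Proof.
move=> [_ _ _ I_mul] [h [h_fin Ih]] f If f_const u.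
apply: NNPP => fu; apply: Ih; move: (fu); rewrite (f_const u fu) => {u fu}.
case ef: (f (mzero E n)) => [c|] // _.
pose h' w := tmul (h w) (Some (- c)).
apply: (I_mul h' f h) => //.
  by case: h_fin => s hs; exists s => w hw; apply: hs => hN; apply: hw; rewrite /h' hN.
move=> w; apply: is_tinf_single.
  move=> y [v [v' [<- ->]]]; case: (classic (f v' = None)) => [->|fv'].
    by left; rewrite tmulC.
  by right; rewrite (f_const v' fv') maddm0 ef /h'; case: (h v) => //= r; rewrite subrK.
case: (classic (h w = None)) => [->|hw]; [by left|right].
exists w, (mzero E n); split; first exact: maddm0.
by rewrite ef /h'; case: (h w) => //= r; rewrite subrK.
Qed.

End Ideals.

Arguments tmonomial {R E n}.

Section Dehomogenization.
Variables (R : realType) (k : nat).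
Implicit Types (I : pset R nat k) (f g h : tpolyfun R nat k).
Implicit Types (F G H : tpolyfun R nat k.+1).

Definition is_dehom F f : Prop :=
  forall u, is_tinf (fun y => exists j, y = F (mcons j u)) (f u).

Definition dehom_ideal I : pset R nat k.+1 :=
  fun F => finsupp F /\ exists f, is_dehom F f /\ I f.

Lemma is_dehom_ex F : finsupp F -> exists f, is_dehom F f.
Proof.
move=> [s hs]; apply: (@is_tinf_choice _ _ _ _ (map F s)) => u j.
by move=> /hs; apply: map_f.
Qed.

Lemma is_dehom_finsupp F f : finsupp F -> is_dehom F f -> finsupp f.
Proof.
move=> [s hs] Ff; exists (map (@mtail k) s) => u fu.
have [j fuE] := is_tinf_attained (Ff u) fu; rewrite fuE in fu.
by rewrite -(mconsK j u); apply/map_f/hs.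
Qed.

Lemma is_dehom_neq_None F f w : is_dehom F f -> F w <> None -> f (mtail w) <> None.
Proof. by move=> Ff; apply: is_tinf_neq_None (Ff _) _; exists (w ord0); rewrite mtailK. Qed.

Lemma is_dehom_supp F f u :
  is_dehom F f -> f u <> None -> exists j, F (mcons j u) <> None.
Proof.
by move=> Ff fu; have [j fuE] := is_tinf_attained (Ff u) fu; exists j; rewrite -fuE.
Qed.

Lemma is_dehom_tadd F G f g :
  is_dehom F f -> is_dehom G g -> is_dehom (tadd F G) (tadd f g).
Proof. by move=> Ff Gg u; apply: is_tinf_tmin. Qed.

Lemma is_dehom_prod G F H g f h :
  is_dehom G g -> is_dehom F f -> is_dehom H h -> is_prod G F H -> is_prod g f h.
Proof.
move=> Gg Ff Hh GFH u.
have lb v v' : madd v v' = u -> tle (h u) (tmul (g v) (f v')).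
  move=> vv'u; case: (classic (g v = None)) => [->|gv]; first by case: (h u).
  case: (classic (f v' = None)) => [->|fv']; first by rewrite tmulC; case: (h u).
  have [i ->] := is_tinf_attained (Gg v) gv.
  have [i' ->] := is_tinf_attained (Ff v') fv'.
  apply: tle_trans (proj1 (Hh u) _ (ex_intro _ (i + i')%N erefl)) _.
  apply: (proj1 (GFH _)); exists (mcons i v), (mcons i' v').
  by rewrite madd_mcons vv'u.
split=> [y [v [v' [vv'u ->]]]|]; first exact: lb.
case: (classic (h u = None)) => [->|hu]; [by left|right].
have [j huE] := is_tinf_attained (Hh u) hu; rewrite huE in hu.
have [w [w' [ww' HE]]] := is_tinf_attained (GFH _) hu.
have ww'u : madd (mtail w) (mtail w') = u by rewrite -mtail_madd ww' mconsK.
exists (mtail w), (mtail w'); split=> //; apply: tle_anti; first exact: lb.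
rewrite huE HE; apply: tle_tmul.
  by apply: (proj1 (Gg _)); exists (w ord0); rewrite mtailK.
by apply: (proj1 (Ff _)); exists (w' ord0); rewrite mtailK.
Qed.

Lemma dehom_ideal_is_ideal I : is_ideal I -> is_ideal (dehom_ideal I).
Proof.
move=> [_ I_oo I_add I_mul]; split=> [F []//| | F G | G F H].
- split; first by exists [::].
  exists (@tinfty R nat k); split=> // u.
  by apply: is_tinf_single => [y [j ->]|]; left.
- move=> [F_fin [f [Ff If]]] [G_fin [g [Gg Ig]]]; split; first exact: tadd_finsupp.
  by exists (tadd f g); split; [apply: is_dehom_tadd|apply: I_add].
- move=> G_fin [F_fin [f [Ff If]]] GFH; have H_fin := prod_finsupp G_fin F_fin GFH.
  split=> //; have [g Gg] := is_dehom_ex G_fin; have [h Hh] := is_dehom_ex H_fin.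
  exists h; split=> //; apply: I_mul (is_dehom_finsupp G_fin Gg) If _.
  exact: is_dehom_prod Gg Ff Hh GFH.
Qed.

Lemma hom_ideal_sub_dehom_ideal I F : is_ideal I -> hom_ideal I F -> dehom_ideal I F.
Proof.
move=> I_ideal; apply; first exact: dehom_ideal_is_ideal.
move=> Fh [f [If [D [f_deg _ FhE]]]]; case: I_ideal => I_fin _ _ _.
split.
  have [s hs] := I_fin f If; exists [seq mcons (D - mdeg u) u | u <- s] => w.
  rewrite FhE; case: eqP => // wD fw.
  have -> : w = mcons (D - mdeg (mtail w)) (mtail w).
    by rewrite -{1}(mtailK w) -wD mdegE addnK.
  by apply/map_f/hs.
exists f; split=> // u; apply: is_tinf_single.
  by move=> y [j ->]; rewrite FhE mconsK; case: eqP; [right|left].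
case: (classic (f u = None)) => [->|fu]; [by left|right].
by exists (D - mdeg u)%N; rewrite FhE mconsK mdeg_mcons subnK ?eqxx // f_deg.
Qed.

End Dehomogenization.

Section Homogenization.
Variables (R : realType) (k : nat).
Implicit Types (I : pset R nat k) (g : tpolyfun R nat k).

Definition homog (D : nat) g : tpolyfun R nat k.+1 :=
  fun w => if mdeg w == D then g (mtail w) else None.

Lemma homog_mulX0 c D g : (forall u, g u <> None -> (mdeg u <= D)%N) ->
  is_prod (tmonomial (mcons c (mzero nat k))) (homog D g) (homog (c + D) g).
Proof.
move=> g_deg w; apply: is_tinf_single.
  move=> y [m [v [mvw ->]]]; rewrite /tmonomial; case: eqP => [mE|_]; last by left.
  rewrite tmul0l /homog; case: eqP => [vD|_]; [right|by left].
  rewrite -mvw mE mdeg_madd mdeg_mcons mdeg0 vD addn0 eqxx.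
  by rewrite mtail_madd mconsK madd0m.
rewrite /homog; case: eqP => w_deg; last by left.
case: (classic (g (mtail w) = None)) => [->|gw]; [by left|right].
have := g_deg _ gw; have := mdegE w; rewrite w_deg => wE tD.
exists (mcons c (mzero nat k)), (mcons (w ord0 - c) (mtail w)); split.
  by rewrite madd_mcons madd0m subnKC ?mtailK //; lia.
rewrite /tmonomial eqxx tmul0l mdeg_mcons mconsK.
by rewrite (_ : (w ord0 - c + mdeg (mtail w) = D)%N) ?eqxx //; lia.
Qed.

(* With D the degree of g, homog e g is x_0^(e - D) times the homogenization. *)
Lemma homog_in_hom_ideal I g e : I g -> finsupp g ->
  (forall u, g u <> None -> (mdeg u <= e)%N) -> hom_ideal I (homog e g).
Proof.
move=> Ig [s hs] g_deg J J_ideal J_gen.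
case: (classic (forall u, g u = None)) => [g_oo|/not_all_ex_not [u0 gu0]].
  by apply: J_gen; exists g; split=> //; exists e; split=> //; left.
pose has_deg d := has (fun u => (g u != None) && (mdeg u == d)) s.
have has_degP u : g u <> None -> has_deg (mdeg u).
  by move=> gu; apply/hasP; exists u; rewrite ?hs // eqxx andbT; apply/eqP.
have has_deg_le d : has_deg d -> (d <= e)%N.
  by case/hasP => u _ /andP [/eqP gu /eqP <-]; apply: g_deg.
have [|D DE D_max] := ex_maxnP _ has_deg_le; first by exists (mdeg u0); apply: has_degP.
case: J_ideal => _ _ _ J_mul; rewrite -(subnK (has_deg_le _ DE)).
apply: J_mul _ _ _ _ _ (homog_mulX0 (e - D) (fun u gu => D_max _ (has_degP u gu))).
  exact: tmonomial_finsupp.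
apply: J_gen; exists g; split=> //; exists D; split=> [u /has_degP /D_max // | | //]; right.
by case/hasP: DE => u _ /andP [/eqP gu /eqP uD]; exists u.
Qed.

End Homogenization.

Section Substitution.
Variables (R : realType) (E : nmodType) (toR : E -> R) (a : R) (n : nat).
Implicit Types (f : tpolyfun R E n.+1) (g : tpolyfun R E n).

Lemma is_subst_ex f : finsupp f -> exists g, is_subst toR a f g.
Proof.
move=> [s hs]; pose t w := tmul (f w) (Some (toR (w ord_max) * a)).
apply: (@is_tinf_choice _ _ _ _ (map t s)) => u k /tmul_neq_None [/hs fuk _].
by rewrite -{2}(mextend_max u k); apply: (map_f t).
Qed.

Lemma is_subst_neq_None f g u k :
  is_subst toR a f g -> f (mextend u k) <> None -> g u <> None.
Proof.
move=> fg fuk; apply: is_tinf_neq_None (fg u) (ex_intro _ k erefl) _.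
by case: (f _) fuk.
Qed.

Lemma is_subst_supp f g u :
  is_subst toR a f g -> g u <> None -> exists k, f (mextend u k) <> None.
Proof.
move=> fg gu; have [k guE] := is_tinf_attained (fg u) gu.
by rewrite guE in gu; exists k; have [] := tmul_neq_None gu.
Qed.

Lemma is_subst_finsupp f g : finsupp f -> is_subst toR a f g -> finsupp g.
Proof.
move=> [s hs] fg; exists (map (@minit E n) s) => u /(is_subst_supp fg) [k /hs fuk].
by rewrite -(mextendK u k); apply: map_f.
Qed.

End Substitution.

(* x_0^(K-j) x_n^j s, with x_n the last variable: the monomials of degree
   deg s + K that dehomogenize and then substitute to the tail of s. *)
Definition mlift n (K : nat) (s : mon nat n.+1) (j : nat) : mon nat n.+2 :=
  mcons (s ord0 + (K - j)) (mextend (mtail s) j).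

Definition mlift_seq n (K : nat) (S : seq (mon nat n.+1)) : seq (mon nat n.+2) :=
  [seq mlift K s j | s <- S, j <- iota 0 K.+1].

Section Lifting.
Variables (n K : nat).
Implicit Types (s : mon nat n.+1) (S : seq (mon nat n.+1)).

Lemma minit_mtail_mlift s j : minit (mtail (mlift K s j)) = mtail s.
Proof. by rewrite mconsK mextendK. Qed.

Lemma size_mlift_seq S : size (mlift_seq K S) = (size S * K.+1)%N.
Proof. by rewrite size_allpairs size_iota. Qed.

Lemma mlift_seq_uniq S : uniq S -> uniq (mlift_seq K S).
Proof.
move=> S_uniq; apply: allpairs_uniq => //; first exact: iota_uniq.
move=> [s j] [s' j'] _ _ /= /mcons_inj [s0E /mextend_inj [tailE jE]].
by rewrite jE in s0E *; rewrite -(mtailK s) -(mtailK s') (addIn s0E) tailE.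
Qed.

Lemma mdeg_mlift_seq S e : (forall s, s \in S -> mdeg s = e) ->
  forall t, t \in mlift_seq K S -> mdeg t = (e + K)%N.
Proof.
move=> S_deg t /allpairsP [[s j] [sS + ->]].
rewrite mem_iota add0n ltnS => /andP [_ /= jK].
rewrite /= /mlift mdeg_mcons mdeg_mextend -(S_deg s sS) (mdegE s); lia.
Qed.

End Lifting.

Section HilbertFunction.
Variable R : realType.

Lemma indep_hom_X0pow k (I : pset R nat k) e : is_ideal I -> no_constant I ->
  indep (hom_ideal I) [:: mcons e (mzero nat k)].
Proof.
move=> I_ideal I_nc F HF [w Fw] F_supp.
have [_ [f [Ff If]]] := hom_ideal_sub_dehom_ideal I_ideal HF.
apply: (is_dehom_neq_None Ff Fw); apply: (I_nc _ If) => u.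
by move=> /(is_dehom_supp Ff) [j /F_supp]; rewrite inE => /eqP /mcons_inj [].
Qed.

Lemma hilb_fun_hom_gt0 k (I : pset R nat k) e m : is_ideal I -> no_constant I ->
  hilb_fun (hom_ideal I) e m -> (0 < m)%N.
Proof.
move=> I_ideal I_nc [_ m_max]; apply: (m_max [:: mcons e (mzero nat k)]) => //.
  by move=> u; rewrite inE => /eqP ->; rewrite mdeg_mcons mdeg0 addn0.
exact: indep_hom_X0pow.
Qed.

Variables (a : R) (n : nat) (I : pset R nat n.+1) (I' : pset R nat n).
Hypothesis I_ideal : is_ideal I.
Hypothesis I'_subst : forall f g, I f -> is_subst (fun k : nat => k%:R) a f g -> I' g.

Lemma indep_mlift_seq e K S : (forall s, s \in S -> mdeg s = e) ->
  indep (hom_ideal I') S -> indep (hom_ideal I) (mlift_seq K S).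
Proof.
move=> S_deg S_indep F HF [w Fw] F_supp.
have [F_fin [f [Ff If]]] := hom_ideal_sub_dehom_ideal I_ideal HF.
have f_fin := is_dehom_finsupp F_fin Ff.
have [g fg] := is_subst_ex (fun k : nat => k%:R) a f_fin.
have g_supp u : g u <> None -> exists2 s, s \in S & u = mtail s.
  move=> /(is_subst_supp fg) [k /(is_dehom_supp Ff) [j /F_supp]].
  case/allpairsP => [[s j'] [sS _ ukE]]; exists s => //.
  by rewrite -(minit_mtail_mlift K s j') -ukE mconsK mextendK.
have g_neq : g (minit (mtail w)) <> None.
  apply: (is_subst_neq_None (k := mtail w ord_max) fg); rewrite minitK.
  exact: (is_dehom_neq_None Ff Fw).
have HG : hom_ideal I' (homog e g).
  apply: homog_in_hom_ideal (I'_subst If fg) (is_subst_finsupp f_fin fg) _.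
  by move=> u /g_supp [s sS ->]; rewrite -(S_deg s sS) mtail_le_mdeg.
have G_neq : exists t, homog e g t <> None.
  by have [s sS sE] := g_supp _ g_neq; exists s; rewrite /homog S_deg // eqxx -sE.
apply: (S_indep _ HG G_neq) => t; rewrite /homog.
case: eqP => // t_deg /g_supp [s sS tE].
by rewrite (mtail_mdeg_inj tE) // t_deg S_deg.
Qed.

Lemma hilb_fun_subst_le e m m' : hilb_fun (hom_ideal I') e m' ->
  hilb_fun (hom_ideal I) (e + e) m -> (m' * e.+1 <= m)%N.
Proof.
move=> [[S [S_uniq <- S_deg S_indep]] _] [_ m_max].
rewrite -size_mlift_seq; apply: m_max.
- exact: (mlift_seq_uniq e S_uniq).
- exact: mdeg_mlift_seq.
- exact: (indep_mlift_seq (K := e) S_deg S_indep).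
Qed.

End HilbertFunction.

Lemma dim_poly_subst_le (R : realType) (a : R) n (I : pset R nat n.+1)
    (I' : pset R nat n) (d d' : int) :
  is_ideal I -> no_constant I ->
  (forall f g, I f -> is_subst (fun k : nat => k%:R) a f g -> I' g) ->
  dim_poly I d -> dim_poly I' d' -> d' <= d - 1.
Proof.
move=> I_ideal I_nc I'_subst [P [[e0 PE] ->]] [P' [[e0' P'E] ->]].
suff : (size P' < size P)%N by lia.
apply: (@size_lt_of_eventually_le _ _ (maxn e0 e0')).
  apply/eqP => P0; have [m [hm Pm]] := PE e0 (leqnn _).
  move: Pm (hilb_fun_hom_gt0 I_ideal I_nc hm); rewrite P0 horner0 => /esym/eqP.
  by rewrite pnatr_eq0 => /eqP ->.
move=> e; rewrite geq_max => /andP [e0e e0'e].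
have [m' [hm' ->]] := P'E e e0'e.
have [m [hm ->]] := PE (e + e)%N (leq_trans e0e (leq_addr _ _)).
rewrite ler0n natr1 -natrM ler_nat mulnC; split=> //.
exact: (hilb_fun_subst_le I_ideal I'_subst hm' hm).
Qed.

Definition mposz n (v : mon nat n) : mon int n := [ffun i => (v i)%:Z].

Section MonomialPosz.
Variable n : nat.
Implicit Types (v w : mon nat n) (u : mon int n).

Lemma mposz_inj : injective (@mposz n).
Proof. by move=> v w /ffunP vw; apply/ffunP => i; have := vw i; rewrite !ffunE => -[]. Qed.

Lemma mposz_madd v w : mposz (madd v w) = madd (mposz v) (mposz w).
Proof. by apply/ffunP => i; rewrite !ffunE. Qed.

Lemma mposz0 : mposz (mzero nat n) = mzero int n.
Proof. by apply/ffunP => i; rewrite !ffunE. Qed.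

Lemma mposz_ge0 v : [forall i, 0 <= mposz v i].
Proof. by apply/forallP => i; rewrite ffunE. Qed.

Lemma mon_int_cases u : (exists v, u = mposz v) \/ ~~ [forall i, 0 <= u i].
Proof.
case: (boolP [forall i, 0 <= u i]) => [/forallP u_ge0|]; [left|by right].
by exists [ffun i => `|u i|%N]; apply/ffunP => i; rewrite !ffunE gez0_abs.
Qed.

End MonomialPosz.

Lemma mposz_mextend n (v : mon nat n) (k : nat) :
  mposz (mextend v k) = mextend (mposz v) k%:Z.
Proof. by apply/ffunP => i; rewrite !ffunE; case: unlift => // j; rewrite ffunE. Qed.

Lemma mextend_ge0 n (u : mon int n) k :
  [forall i, 0 <= mextend u k i] -> [forall i, 0 <= u i] /\ 0 <= k.
Proof.
move/forallP => u_ge0; split; last by have := u_ge0 ord_max; rewrite mextend_max.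
by apply/forallP => i; have := u_ge0 (lift ord_max i); rewrite mextend_lift.
Qed.

Section LaurentPolynomials.
Variables (R : realType) (n : nat).
Implicit Types (f g h : tpolyfun R nat n) (u : mon int n).

Definition poly_part (I : pset R int n) : pset R nat n :=
  fun f => finsupp f /\ I (laurent_of f).

Lemma laurent_of_mposz f v : laurent_of f (mposz v) = f v.
Proof. by rewrite /laurent_of mposz_ge0; congr f; apply/ffunP => i; rewrite !ffunE. Qed.

Lemma laurent_of_neg f u : ~~ [forall i, 0 <= u i] -> laurent_of f u = None.
Proof. by rewrite /laurent_of => /negbTE ->. Qed.

Lemma laurent_of_supp f u : laurent_of f u <> None -> exists v, u = mposz v.
Proof. by case: (mon_int_cases u) => // /(laurent_of_neg f). Qed.

Lemma laurent_of_finsupp f : finsupp f -> finsupp (laurent_of f).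
Proof.
move=> [s hs]; exists (map (@mposz n) s) => u fu.
by have [v uE] := laurent_of_supp fu; rewrite uE laurent_of_mposz in fu *; apply/map_f/hs.
Qed.

Lemma laurent_of_tinfty : laurent_of (@tinfty R nat n) = @tinfty R int n.
Proof. by apply: functional_extensionality => u; rewrite /laurent_of; case: ifP. Qed.

Lemma laurent_of_tadd f g :
  laurent_of (tadd f g) = tadd (laurent_of f) (laurent_of g).
Proof. by apply: functional_extensionality => u; rewrite /laurent_of /tadd; case: ifP. Qed.

Lemma is_prod_laurent_of g f h :
  is_prod g f h -> is_prod (laurent_of g) (laurent_of f) (laurent_of h).
Proof.
move=> gfh w.
have supp u u' : tmul (laurent_of g u) (laurent_of f u') = None \/
    exists x x', u = mposz x /\ u' = mposz x'.
  case: (classic (tmul (laurent_of g u) (laurent_of f u') = None)); first by left.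
  case/tmul_neq_None => /laurent_of_supp [x ->] /laurent_of_supp [x' ->].
  by right; exists x, x'.
case: (mon_int_cases w) => [[v ->]|w_neg].
  rewrite laurent_of_mposz; apply: is_tinf_ext (gfh v) _ _.
    move=> y [u [u' [uu'v ->]]]; case: (supp u u') => [|[x [x' [ux ux']]]]; [by left|right].
    exists x, x'; rewrite ux ux' !laurent_of_mposz; split=> //.
    by apply: mposz_inj; rewrite mposz_madd -ux -ux'.
  move=> y [x [x' [xx'v ->]]]; exists (mposz x), (mposz x').
  by rewrite -mposz_madd xx'v !laurent_of_mposz.
rewrite laurent_of_neg //; apply: is_tinf_single => [y [u [u' [uu'w ->]]]|]; last by left.
case: (supp u u') => [|[x [x' [ux ux']]]]; [by left|].
by move: w_neg; rewrite -uu'w ux ux' -mposz_madd mposz_ge0.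
Qed.

Lemma poly_part_is_ideal (I : pset R int n) : is_ideal I -> is_ideal (poly_part I).
Proof.
move=> [_ I_oo I_add I_mul].
split=> [f []//| | f g [f_fin If] [g_fin Ig] | g f h g_fin [f_fin If] gfh].
- by split; [exists [::]|rewrite laurent_of_tinfty].
- by split; [apply: tadd_finsupp|rewrite laurent_of_tadd; apply: I_add].
- split; first exact: prod_finsupp g_fin f_fin gfh.
  exact: I_mul (laurent_of_finsupp g_fin) If (is_prod_laurent_of gfh).
Qed.

Lemma poly_part_no_constant (I : pset R int n) : is_ideal I -> tproper I ->
  no_constant (poly_part I).
Proof.
move=> I_ideal I_proper f [_ If] f_const v.
rewrite -(laurent_of_mposz f v); apply: (proper_no_constant I_ideal I_proper If) => u fu.
have [w uE] := laurent_of_supp fu; rewrite uE laurent_of_mposz in fu *.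
by rewrite (f_const w fu) mposz0.
Qed.

End LaurentPolynomials.

Section LaurentSubstitution.
Variables (R : realType) (a : R) (n : nat).

Lemma is_subst_laurent_of (f : tpolyfun R nat n.+1) (g : tpolyfun R nat n) :
  is_subst (fun k : nat => k%:R) a f g ->
  is_subst (fun k : int => k%:~R) a (laurent_of f) (laurent_of g).
Proof.
move=> fg u; case: (mon_int_cases u) => [[v ->]|u_neg].
  rewrite laurent_of_mposz; apply: is_tinf_ext (fg v) _ _.
    move=> _ [k ->]; case: (classic (laurent_of f (mextend (mposz v) k) = None)).
      by move=> ->; left.
    move=> /laurent_of_supp [w wE].
    have : [forall i, 0 <= mextend (mposz v) k i] by rewrite wE mposz_ge0.
    case/mextend_ge0 => _; case: k {wE} => // k _; right; exists k.
    by rewrite -mposz_mextend laurent_of_mposz.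
  by move=> y [k ->]; exists (Posz k); rewrite -mposz_mextend laurent_of_mposz.
rewrite laurent_of_neg //; apply: is_tinf_single => [y [k ->]|]; last by left.
by left; rewrite laurent_of_neg //; apply: contra u_neg => /mextend_ge0 [].
Qed.

Lemma subst_poly_part (I : pset R int n.+1) f g :
  poly_part I f -> is_subst (fun k : nat => k%:R) a f g ->
  poly_part (subst_set (fun k : int => k%:~R) a I) g.
Proof.
move=> [f_fin If] fg; split; first exact: is_subst_finsupp f_fin fg.
by exists (laurent_of f); split; last exact: is_subst_laurent_of.
Qed.

End LaurentSubstitution.

Theorem proposition4p1 (R : realType) (n : nat) (a : R) :
  (forall I : pset R nat n.+1, tropical_ideal I -> tproper I ->
     forall d d' : int, dim_poly I d ->
       dim_poly (subst_set (fun k : nat => k%:R) a I) d' -> d' <= d - 1)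
  /\
  (forall I : pset R int n.+1, tropical_ideal I -> tproper I ->
     forall d d' : int, dim_laurent I d ->
       dim_laurent (subst_set (fun k : int => k%:~R) a I) d' -> d' <= d - 1).
Proof.
split=> I [I_ideal _] I_proper d d'.
  apply: (dim_poly_subst_le (a := a) I_ideal (proper_no_constant I_ideal I_proper)).
  by move=> f g If fg; exists f.
apply: (dim_poly_subst_le (a := a) (poly_part_is_ideal I_ideal)).
  exact: poly_part_no_constant I_ideal I_proper.
exact: subst_poly_part.
Qed.
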